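(* Fix $b\in\mathbb{N}$ and let $\Lambda:\mathbb{N}\times\mathbb{N}\to\mathbb{C}$ be a bounded function such that for each $k\in\mathbb{N}$ the limit \[ M_{b,k}(\Lambda)=\lim_{N\to\infty}\frac{\sum_{(r,s)\in T_{N,b,k}}\Lambda(r,s)}{|T_{N,b,k}|} \] exists, where $T_{N,b,k}=\{(r,s): 0<r,s\le N,\ \gcd_b(r,s)=k\}$. Let $\zeta_{\Lambda,b}(s)=\sum_{k=1}^\infty M_{b,k}(\Lambda)k^{-s}$. Then $\zeta_{\Lambda,b}(s)$ converges at $s=b+1$, the mean value $M(\Lambda)$ exists, and \[ M(\Lambda)=\frac{\zeta_{\Lambda,b}(b+1)}{\zeta(b+1)}, \] where $\zeta$ is the Riemann zeta function.
   Context: For $r,s\in\mathbb{N}$, $\gcd_b(r,s)=\max\{k\in\mathbb{N} : k\mid r \text{ and } k^b\mid s\}$. For $N\in\mathbb{N}$ let $T_N=\{(r,s): 0<r,s\le N\}$; the mean value of $\Lambda$ is $M(\Lambda)=\lim_{N\to\infty}\frac{1}{N^2}\sum_{(r,s)\in T_N}\Lambda(r,s)$. *)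

From Stdlib Require Import Reals Arith List.
From Coquelicot Require Import Coquelicot.
Import ListNotations.
Open Scope R_scope.

(* gcd_b(r,s) = max { k in N : k | r and k^b | s }.  For r > 0 every such k
   satisfies 1 <= k <= r, and k = 1 always qualifies. *)
Definition gcdb (b r s : nat) : nat :=
  fold_right Nat.max 0%nat
    (filter (fun k => (Nat.eqb (r mod k) 0 && Nat.eqb (s mod (k ^ b)) 0)%bool)
            (seq 1 r)).

Definition TN (N : nat) : list (nat * nat) := list_prod (seq 1 N) (seq 1 N).

Definition TNbk (N b k : nat) : list (nat * nat) :=
  filter (fun p => Nat.eqb (gcdb b (fst p) (snd p)) k) (TN N).

Definition sumC (L : nat -> nat -> C) (l : list (nat * nat)) : C :=
  fold_right Cplus (RtoC 0) (map (fun p => L (fst p) (snd p)) l).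

Definition avg_bk (L : nat -> nat -> C) (b k N : nat) : C :=
  Cdiv (sumC L (TNbk N b k)) (RtoC (INR (length (TNbk N b k)))).

Definition mean_N (L : nat -> nat -> C) (N : nat) : C :=
  Cdiv (sumC L (TN N)) (RtoC (INR N ^ 2)).

Definition zeta_nat (s : nat) : R := Series (fun n => / (INR (S n)) ^ s).

(* Write [g = gcd_b(r, s)].  Since [j | g] iff [j | r] and [j^b | s], Möbius
   inversion over the divisors of [g / k] gives
     |T_{N,b,k}| = sum_d mu(d) floor(N / kd) floor(N / (kd)^b),
   so the density |T_{N,b,k}| / N^2 tends to c_b / k^(b+1), where
   c_b = sum_d mu(d) / d^(b+1); moreover all these densities are bounded by
   1 / k^2.  Dominated convergence for series (Tannery's theorem) may therefore
   be applied to sum_k |T_{N,b,k}| / N^2 = 1, which gives c_b zeta(b+1) = 1,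
   and to
     (1/N^2) sum_{T_N} Lambda = sum_k (|T_{N,b,k}| / N^2) * average of Lambda on T_{N,b,k},
   which gives M(Lambda) = c_b zeta_{Lambda,b}(b+1) = zeta_{Lambda,b}(b+1) / zeta(b+1). *)

From Stdlib Require Import Reals List Lia Lra.
From Coquelicot Require Import Coquelicot.
From Corelib Require Import ssreflect ssrfun ssrbool.
From HB Require Import structures.
From mathcomp Require ssreflect ssrfun ssrbool eqtype ssrnat seq div prime bigop zify.
Open Scope R_scope.

(** * Tannery's theorem *)

Section NormedModuleLimits.
Context {A : AbsRing} {V : NormedModule A}.

Lemma filterlim_sum_n (u : nat -> nat -> V) (l : nat -> V) n :
  (forall k, filterlim (fun N => u N k) eventually (locally (l k))) ->
  filterlim (fun N => sum_n (u N) n) eventually (locally (sum_n l n)).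
Proof.
move=> ul; elim: n => [|n IH].
  by rewrite sum_O; apply: filterlim_ext (ul 0%nat) => N; rewrite sum_O.
rewrite sum_Sn; apply: (filterlim_ext (fun N => plus (sum_n (u N) n) (u N (S n)))).
  by move=> N; rewrite sum_Sn.
exact: filterlim_comp_2 IH (ul _) (filterlim_plus _ _).
Qed.

Lemma norm_lim_le (a : nat -> V) (x : V) (M : R) :
  filterlim a eventually (locally x) -> (forall N, norm (a N) <= M) -> norm x <= M.
Proof.
move=> ax aM; suff : Rbar_le (norm x) M by [].
apply: (filterlim_le (F := eventually) (fun N => norm (a N)) (fun _ => M)).
- by exists 0%nat.
- exact: filterlim_comp ax (filterlim_norm x).
- exact: filterlim_const.
Qed.

End NormedModuleLimits.

Lemma tannery {A : AbsRing} {V : CompleteNormedModule A}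
    (a : nat -> nat -> V) (f : nat -> V) (M : nat -> R) :
  (forall n, filterlim (fun N => a N n) eventually (locally (f n))) ->
  (forall N n, norm (a N n) <= M n) -> ex_series M ->
  exists l, is_series f l /\ filterlim (fun N => sum_n (a N) N) eventually (locally l).
Proof.
move=> af aM [SM SM_lim].
have fM n : norm (f n) <= M n by apply: norm_lim_le (af n) _ => N; apply: aM.
have [l fl] := ex_series_le f M fM (ex_intro _ SM SM_lim).
exists l; split => //; apply/filterlim_locally_ball_norm => eps.
have eps3_gt0 : 0 < eps / 3 by apply: Rdiv_lt_0_compat; [apply: cond_pos | lra].
set eps3 := mkposreal _ eps3_gt0.
have [K0 M_cauchy] := Cauchy_ex_series M (ex_intro _ SM SM_lim) eps3.
have [K1 f_close] := proj1 (filterlim_locally_ball_norm _ _) fl eps3.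
set K := max K0 K1.
have K0_K : (K0 <= K)%nat by apply: Nat.le_max_l.
have K1_K : (K1 <= K)%nat by apply: Nat.le_max_r.
clearbody K.
have [N1 aK_close] :=
  proj1 (filterlim_locally_ball_norm _ _) (filterlim_sum_n a f K af) eps3.
exists (max N1 (S K)) => N N_ge; rewrite /ball_norm (minus_trans (sum_n (a N) K)).
rewrite [minus (sum_n (a N) K) l](minus_trans (sum_n f K)).
have head : norm (minus (sum_n (a N) N) (sum_n (a N) K)) < eps / 3.
  rewrite -sum_n_m_sum_n; last lia.
  apply: Rle_lt_trans (norm_sum_n_m _ _ _) _.
  apply: Rle_lt_trans (sum_n_m_le _ M _ _ (aM N)) _.
  apply: Rle_lt_trans (Rle_abs _) (M_cauchy _ _ _ _); lia.
have mid : norm (minus (sum_n (a N) K) (sum_n f K)) < eps / 3 by apply: aK_close; lia.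
have tail : norm (minus (sum_n f K) l) < eps / 3 by apply: f_close; lia.
apply: Rle_lt_trans (norm_triangle _ _) _.
apply: Rle_lt_trans (Rplus_le_compat_l _ _ _ (norm_triangle _ _)) _.
lra.
Qed.

Lemma INR_S_gt0 n : 0 < INR (S n).
Proof. exact: lt_0_INR (Nat.lt_0_succ n). Qed.

Lemma sum_Sn_R (a : nat -> R) N : sum_n a (S N) = sum_n a N + a (S N).
Proof. exact: sum_Sn. Qed.

Lemma sum_n_Rmult_r (u : nat -> R) c N : sum_n (fun n => u n * c) N = sum_n u N * c.
Proof. exact: sum_n_mult_r. Qed.

Lemma sum_n_inv_sq_le N : sum_n (fun n => / INR (S n) ^ 2) N <= 2 - / INR (S N).
Proof.
elim: N => [|N IH]; first by rewrite sum_O /=; lra.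
rewrite sum_Sn_R.
have := INR_S_gt0 N; rewrite [INR (S (S N))]S_INR; move: (INR (S N)) IH => x IH x_gt0.
suff : / (x + 1) ^ 2 <= / x - / (x + 1) by lra.
have -> : / x - / (x + 1) = / (x * (x + 1)) by field; lra.
apply: Rinv_le_contravar; nra.
Qed.

Lemma ex_series_inv_sq : ex_series (fun n => / INR (S n) ^ 2).
Proof.
have [l l_lim] : ex_finite_lim_seq (sum_n (fun n => / INR (S n) ^ 2)).
  apply: (ex_finite_lim_seq_incr _ 2) => N.
    rewrite sum_Sn_R; have h := INR_S_gt0 (S N).
    have := Rinv_0_lt_compat _ (pow_lt _ 2 h); lra.
  by have := sum_n_inv_sq_le N; have := Rinv_0_lt_compat _ (INR_S_gt0 N); lra.
by exists l.
Qed.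

Lemma is_lim_seq_inv_INR : is_lim_seq (fun N => / INR N) 0.
Proof. by apply: (is_lim_seq_inv _ p_infty is_lim_seq_INR). Qed.

Lemma RtoC_neq0 (x : R) : x <> 0 -> RtoC x <> RtoC 0.
Proof. by move=> x0 [/x0]. Qed.

Lemma filterlim_RtoC_mult (r : nat -> R) (rl : R) (w : nat -> C) (wl : C) :
  is_lim_seq r rl -> filterlim w eventually (locally wl) ->
  filterlim (fun N => Cmult (RtoC (r N)) (w N)) eventually (locally (Cmult (RtoC rl) wl)).
Proof.
move=> r_lim w_lim; rewrite -scal_R_Cmult.
apply: (filterlim_ext (fun N => @scal R_Ring C_R_ModuleSpace (r N) (w N))) => [N|].
  by rewrite scal_R_Cmult.
exact: filterlim_comp_2 r_lim w_lim (filterlim_scal (V := C_R_NormedModule) _ _).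
Qed.

Lemma sum_n_Cmult_r (u : nat -> C) c N :
  sum_n (fun n => Cmult (u n) c) N = Cmult (sum_n u N) c.
Proof. exact: sum_n_mult_r. Qed.

Lemma Cmult_RtoC_K (x : R) (z : C) : x <> 0 -> Cdiv (Cmult (RtoC x) z) (RtoC x) = z.
Proof. by move=> x0; field; exact: RtoC_neq0. Qed.

Lemma Cmult_RtoC_div (u v x : R) (z : C) : u * v = 1 -> x <> 0 ->
  Cmult (RtoC u) (Cmult (RtoC (v / x)) z) = Cdiv z (RtoC x).
Proof.
move=> uv x0; have u0 : u <> 0 by move=> u0; rewrite u0 Rmult_0_l in uv; lra.
have -> : v = / u by apply: (Rmult_eq_reg_l u) => //; rewrite uv; field.
rewrite /Rdiv RtoC_mult !RtoC_inv //; field; split; exact: RtoC_neq0.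
Qed.

Lemma Cmod_sumC_le (L : nat -> nat -> C) B l :
  (forall r s, Cmod (L r s) <= B) -> Cmod (sumC L l) <= B * INR (length l).
Proof.
move=> LB; elim: l => [|p l IH]; first by rewrite /= Cmod_0; lra.
rewrite [length _]/= S_INR; have := Cmod_triangle (L p.1 p.2) (sumC L l).
have := LB p.1 p.2; rewrite /sumC /= -/(sumC L l); lra.
Qed.

Lemma Cmod_avg_bk_le (L : nat -> nat -> C) B b k N :
  (forall r s, Cmod (L r s) <= B) -> Cmod (avg_bk L b k N) <= B.
Proof.
move=> LB; have B_ge0 : 0 <= B by apply: Rle_trans (Cmod_ge_0 _) (LB 0%nat 0%nat).
rewrite /avg_bk; case: (TNbk N b k) => [|p l].
  by rewrite /= /Cdiv Cmult_0_l Cmod_0.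
have n_gt0 : 0 < INR (length (p :: l)) by apply: lt_0_INR => /=; lia.
rewrite Cmod_div; last by apply: RtoC_neq0; lra.
rewrite Cmod_R Rabs_pos_eq; last lra.
by apply/Rle_div_l => //; apply: Cmod_sumC_le.
Qed.

(* Also for [l = nil], where both sides are [0] because [0 / 0 = 0]. *)
Lemma sumC_div_split (L : nat -> nat -> C) l d : d <> 0 ->
  Cdiv (sumC L l) (RtoC d) =
  Cmult (RtoC (INR (length l) / d)) (Cdiv (sumC L l) (RtoC (INR (length l)))).
Proof.
move=> d0; case: l => [|p l]; first by rewrite /= /Cdiv !Cmult_0_l Cmult_0_r.
have n0 : INR (length (p :: l)) <> 0 by apply/not_0_INR.
rewrite /Rdiv RtoC_mult RtoC_inv //; field; split; exact: RtoC_neq0.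
Qed.

Module GcdbDensity.
Import mathcomp.boot.ssreflect mathcomp.boot.ssrfun mathcomp.boot.ssrbool.
Import mathcomp.boot.eqtype mathcomp.boot.ssrnat mathcomp.boot.seq.
Import mathcomp.boot.div mathcomp.boot.prime mathcomp.boot.bigop.
Import mathcomp.zify.zify.
Local Open Scope nat_scope.

Lemma Nat_pow_expn m n : Nat.pow m n = m ^ n.
Proof. by elim: n => //= n IH; rewrite expnS IH. Qed.

Lemma Nat_eqb_eqn m n : Nat.eqb m n = (m == n).
Proof. by case: Nat.eqb_spec => [->|/eqP/negbTE]; rewrite ?eqxx. Qed.

Lemma Nat_eqb_mod0 r k : Nat.eqb (r mod k) 0 = (k %| r).
Proof.
apply/idP/idP => [/Nat.eqb_spec/Nat.Lcm0.mod_divide [q ->] | /dvdnP [q ->]].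
  exact: dvdn_mull.
by apply/Nat.eqb_spec/Nat.Lcm0.mod_divide; exists q.
Qed.

Definition bdvdn b j r s := (j %| r) && (j ^ b %| s).

Lemma fold_max_in (l : list nat) : l <> nil -> List.In (fold_right Nat.max 0 l) l.
Proof.
elim: l => //= x [|y l] IH _ /=; first by left; lia.
by case: (Nat.max_spec x (fold_right Nat.max 0 (y :: l))) => -[_ ->];
  [right; apply: IH | left].
Qed.

Lemma fold_max_ge (l : list nat) x : List.In x l -> x <= fold_right Nat.max 0 l.
Proof. elim: l => //= y l IH [<-|/IH]; lia. Qed.

Lemma gcdb_spec b r s : 0 < r ->
  [/\ 0 < gcdb b r s, gcdb b r s <= r, bdvdn b (gcdb b r s) r s
    & forall j, 0 < j -> bdvdn b j r s -> j <= gcdb b r s].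
Proof.
move=> r_gt0; rewrite /gcdb; set l := List.filter _ _.
have memP j : List.In j l <-> 0 < j <= r /\ bdvdn b j r s.
  rewrite filter_In in_seq Nat_pow_expn !Nat_eqb_mod0.
  by split=> -[j_r ?]; split=> //; lia.
have /memP[/andP[-> ->] ->] : List.In (fold_right Nat.max 0 l) l.
  apply: fold_max_in => l0; suff : List.In 1 l by rewrite l0.
  by apply/memP; rewrite /bdvdn exp1n !dvd1n.
split=> // j j_gt0 bdj; apply: fold_max_ge; apply/memP; split=> //.
by rewrite j_gt0 dvdn_leq //; case/andP: bdj.
Qed.

Lemma lcmn_expn_dvd a c b s : 0 < a -> 0 < c ->
  a ^ b %| s -> c ^ b %| s -> lcmn a c ^ b %| s.
Proof.
(* a = a' g and c = c' g with g = gcd(a, c) and a', c' coprime; then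
   lcm(a, c) = a' c' g, and a'^b, c'^b both divide s / g^b. *)
move=> a_gt0 c_gt0; set g := gcdn a c.
have g_gt0 : 0 < g by rewrite gcdn_gt0 a_gt0.
have [a' ea] : exists a', a = a' * g by apply/dvdnP/dvdn_gcdl.
have [c' ec] : exists c', c = c' * g by apply/dvdnP/dvdn_gcdr.
have co_ac : coprime a' c'.
  by rewrite /coprime -(eqn_pmul2r g_gt0) mul1n muln_gcdl -ea -ec.
have -> : lcmn a c = a' * c' * g.
  by rewrite ea ec -muln_lcml -(muln1 (lcmn _ _)) -(eqP co_ac) muln_lcm_gcd.
have gb_gt0 : 0 < g ^ b by rewrite expn_gt0 g_gt0.
rewrite ea ec !expnMn => a'g_s c'g_s.
have [u es] : exists u, s = u * g ^ b.
  by apply/dvdnP; apply: dvdn_trans a'g_s; apply: dvdn_mull.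
move: a'g_s c'g_s; rewrite es !dvdn_pmul2r // => a'_u c'_u.
by rewrite Gauss_dvd ?a'_u ?c'_u // coprimeXl // coprimeXr.
Qed.

Lemma dvdn_gcdb b r s j : 0 < r -> 0 < j -> (j %| gcdb b r s) = bdvdn b j r s.
Proof.
move=> r_gt0 j_gt0; have [g_gt0 _ /andP[g_r g_s] g_max] := gcdb_spec b r s r_gt0.
apply/idP/andP => [j_g | [j_r j_s]].
  by rewrite (dvdn_trans j_g g_r) (dvdn_trans (dvdn_exp2r b j_g) g_s).
have l_gt0 : 0 < lcmn j (gcdb b r s) by rewrite lcmn_gt0 j_gt0.
have l_max : lcmn j (gcdb b r s) <= gcdb b r s.
  by apply: g_max; rewrite // /bdvdn dvdn_lcm j_r g_r lcmn_expn_dvd.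
have l_min : gcdb b r s <= lcmn j (gcdb b r s) by rewrite dvdn_leq ?dvdn_lcmr.
have -> : gcdb b r s = lcmn j (gcdb b r s) by apply/anti_leq; rewrite l_min l_max.
exact: dvdn_lcml.
Qed.

(** * The Möbius function *)

HB.instance Definition _ := Monoid.isComLaw.Build R 0%R Rplus
  (fun x y z => esym (Rplus_assoc x y z)) Rplus_comm Rplus_0_l.
HB.instance Definition _ := Monoid.isComLaw.Build R 1%R Rmult
  (fun x y z => esym (Rmult_assoc x y z)) Rmult_comm Rmult_1_l.
HB.instance Definition _ := Monoid.isMulLaw.Build R 0%R Rmult Rmult_0_l Rmult_0_r.
HB.instance Definition _ :=
  Monoid.isAddLaw.Build R Rmult Rplus Rmult_plus_distr_r Rmult_plus_distr_l.

Definition moebius n : R :=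
  \big[Rmult/1%R]_(p <- primes n) (if logn p n == 1 then (-1)%R else 0%R).

Lemma moebius1 : moebius 1 = 1%R.
Proof. by rewrite /moebius (_ : primes 1 = [::]) // big_nil. Qed.

Lemma Rabs_moebius_le1 n : (Rabs (moebius n) <= 1)%R.
Proof.
rewrite /moebius; elim: (primes n) => [|p ps IH]; rewrite ?big_nil ?big_cons.
  by rewrite Rabs_R1; lra.
rewrite Rabs_mult; case: ifP => _; rewrite ?Rabs_Ropp ?Rabs_R1 ?Rabs_R0; lra.
Qed.

Lemma moebius_sqr_dvd p d : prime p -> 0 < d -> p * p %| d -> moebius d = 0%R.
Proof.
move=> p_pr d_gt0 pp_d; have p_d : p %| d by apply: dvdn_trans pp_d; apply: dvdn_mulr.
have p_in : p \in primes d by rewrite mem_primes p_pr d_gt0.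
rewrite -(expnS p 1) pfactor_dvdn // in pp_d.
by rewrite /moebius (big_rem p p_in) /= ifN ?Rmult_0_l //; apply/eqP; lia.
Qed.

Lemma moebius_mul_prime p e : prime p -> 0 < e -> ~~ (p %| e) ->
  moebius (p * e) = (- moebius e)%R.
Proof.
move=> p_pr e_gt0 p_e; have p_gt0 := prime_gt0 p_pr.
have p_ne : p \notin primes e by rewrite mem_primes p_pr e_gt0.
have perm_pe : perm_eq (primes (p * e)) (p :: primes e).
  apply: uniq_perm; rewrite /= ?primes_uniq ?p_ne // => q.
  by rewrite primesM // primes_prime // inE.
have logn_pe q : logn q (p * e) = (q == p) + logn q e.
  by rewrite lognM // logn_prime.
have lpe0 : logn p e = 0 by apply/eqP; rewrite -leqn0 leqNgt logn_gt0.
rewrite /moebius (perm_big _ perm_pe) big_cons logn_pe eqxx lpe0 /=.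
rewrite big_seq [X in _ = (- X)%R]big_seq.
rewrite (eq_bigr (fun q => if logn q e == 1 then (-1)%R else 0%R)) => [|q q_e].
  by rewrite -Ropp_mult_distr_l Rmult_1_l.
have q_p : (q == p) = false by apply: contraNF p_ne => /eqP <-.
by rewrite logn_pe q_p.
Qed.

Lemma perm_divisors_prime_part p m : prime p -> 0 < m -> p %| m ->
  perm_eq [seq d <- divisors m | (p %| d) && ~~ (p * p %| d)]
          [seq p * e | e <- [seq e <- divisors m | ~~ (p %| e)]].
Proof.
move=> p_pr m_gt0 p_m; have p_gt0 := prime_gt0 p_pr.
have pe_m e : ~~ (p %| e) -> (p * e %| m) = (e %| m).
  by move=> p_e; rewrite Gauss_dvd ?prime_coprime // p_m.
apply: uniq_perm.
- exact/filter_uniq/divisors_uniq.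
- rewrite map_inj_uniq; first exact/filter_uniq/divisors_uniq.
  by move=> x y /eqP; rewrite eqn_pmul2l // => /eqP.
move=> d; rewrite mem_filter -dvdn_divisors //; apply/idP/mapP.
  case/andP=> /andP[p_d pp_d] d_m; have [e de] := dvdnP p_d.
  rewrite de dvdn_pmul2r // in pp_d; exists e; last by rewrite de mulnC.
  by rewrite mem_filter pp_d -dvdn_divisors // -(pe_m e pp_d) mulnC -de.
case=> e; rewrite mem_filter -dvdn_divisors // => /andP[p_e e_m] ->.
by rewrite dvdn_mulr //= dvdn_pmul2l // p_e pe_m.
Qed.

Lemma sum_moebius_divisors m : 0 < m ->
  \big[Rplus/0%R]_(d <- divisors m) moebius d = if m == 1 then 1%R else 0%R.
Proof.
(* With p the least prime factor of m, the divisors divisible by p^2 contribute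
   0, and each p e with p not dividing e cancels against e. *)
move=> m_gt0; case: (ltngtP m 1) => [|m_gt1|->]; first lia; last first.
  by rewrite /= big_seq1 moebius1.
set p := pdiv m; have p_pr : prime p by apply: pdiv_prime.
rewrite (bigID (fun d => p %| d)) (bigID (fun d => p * p %| d)) /=.
rewrite big1_seq ?Rplus_0_l => [|d /andP[/andP[_ pp_d] d_m]]; last first.
  by rewrite -dvdn_divisors // in d_m; apply: (moebius_sqr_dvd _ _ p_pr _ pp_d);
    apply: dvdn_gt0 d_m.
have perm_p := perm_divisors_prime_part _ _ p_pr m_gt0 (pdiv_dvd m).
rewrite -[X in (X + _)%R]big_filter (perm_big _ perm_p).
rewrite big_map big_filter.
have -> : \big[Rplus/0%R]_(e <- divisors m | ~~ (p %| e)) moebius (p * e)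
        = \big[Rplus/0%R]_(e <- divisors m | ~~ (p %| e)) (- moebius e)%R.
  rewrite big_seq_cond [RHS]big_seq_cond; apply: eq_bigr => e /andP[e_m p_e].
  rewrite -dvdn_divisors // in e_m.
  by rewrite moebius_mul_prime // (dvdn_gt0 m_gt0 e_m).
by rewrite -(big_morph Ropp Ropp_plus_distr Ropp_0) Rplus_opp_l.
Qed.

Lemma sum_moebius_dvdn m M : 0 < m <= M ->
  \big[Rplus/0%R]_(d <- iota 1 M | d %| m) moebius d = if m == 1 then 1%R else 0%R.
Proof.
case/andP=> m_gt0 m_M; rewrite -big_filter -(sum_moebius_divisors _ m_gt0).
apply/perm_big/uniq_perm; rewrite ?filter_uniq ?iota_uniq ?divisors_uniq // => d.
rewrite mem_filter mem_iota -dvdn_divisors //; case d_m: (d %| m) => //=.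
by have := dvdn_leq m_gt0 d_m; have := dvdn_gt0 m_gt0 d_m; lia.
Qed.

(** * Counting the sets T_{N,b,k} *)

Lemma big_partition_iota {T : Type} {idx : T} {op : Monoid.com_law idx} {I : eqType}
    (l : seq I) (g : I -> nat) (F : I -> T) a n :
  (forall x, x \in l -> a <= g x < a + n) ->
  \big[op/idx]_(x <- l) F x =
  \big[op/idx]_(k <- iota a n) \big[op/idx]_(x <- l | g x == k) F x.
Proof.
move=> g_range; rewrite (exchange_big_dep predT) //= big_seq [RHS]big_seq.
apply: eq_bigr => x x_l; rewrite big_const_seq.
rewrite (@eq_count _ _ (pred1 (g x))) => [|k]; last by rewrite /= eq_sym.
by rewrite count_uniq_mem ?iota_uniq // mem_iota g_range //= Monoid.mulm1.
Qed.

Lemma List_seq_iota m n : List.seq m n = iota m n.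
Proof. by elim: n m => //= n IH m; rewrite IH. Qed.

Lemma List_filter_filter (T : Type) (P : pred T) (l : list T) : List.filter P l = filter P l.
Proof. by elim: l => //= x l ->. Qed.

Lemma length_size (T : Type) (l : list T) : length l = size l.
Proof. by elim: l => //= x l ->. Qed.

Lemma list_prod_allpairs (T U : Type) (l1 : list T) (l2 : list U) :
  list_prod l1 l2 = [seq (x, y) | x <- l1, y <- l2].
Proof.
elim: l1 => //= x l1 ->; move: [seq (x', y) | x' <- l1, y <- l2] => rest.
by elim: l2 => //= y l2 ->.
Qed.

Lemma TN_allpairs N : TN N = [seq (x, y) | x <- iota 1 N, y <- iota 1 N].
Proof. by rewrite /TN List_seq_iota list_prod_allpairs. Qed.

Lemma TNbk_filter N b k : TNbk N b k = [seq p <- TN N | gcdb b p.1 p.2 == k].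
Proof.
by rewrite /TNbk List_filter_filter; apply: eq_filter => p; rewrite Nat_eqb_eqn.
Qed.

Lemma sumR1_count (T : Type) (r : seq T) (P : pred T) :
  \big[Rplus/0%R]_(x <- r | P x) 1%R = INR (count P r).
Proof.
rewrite big_const_seq; elim: (count P r) => [|n IH] //.
by rewrite iterS IH S_INR Rplus_comm.
Qed.

Lemma INR_count_TN (P : nat -> nat -> bool) N :
  INR (count (fun p => P p.1 p.2) (TN N)) =
  \big[Rplus/0%R]_(x <- iota 1 N) \big[Rplus/0%R]_(y <- iota 1 N | P x y) 1%R.
Proof.
rewrite -sumR1_count TN_allpairs big_mkcond big_allpairs.
by apply: eq_bigr => x _; rewrite [RHS]big_mkcond.
Qed.

Lemma count_dvdn_iota j N : 0 < j -> count (dvdn j) (iota 1 N) = N %/ j.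
Proof.
move=> j_gt0; elim: N => [|N IH]; first by rewrite div0n.
by rewrite -[N.+1]addn1 iotaD count_cat IH /= addn0 addn1 add1n divnS // addnC.
Qed.

Lemma sum_dvdn_gcdb b j N : 0 < j ->
  \big[Rplus/0%R]_(x <- iota 1 N) \big[Rplus/0%R]_(y <- iota 1 N | j %| gcdb b x y) 1%R
  = (INR (N %/ j) * INR (N %/ j ^ b))%R.
Proof.
move=> j_gt0; rewrite -!count_dvdn_iota ?expn_gt0 ?j_gt0 // -!sumR1_count big_distrl.
rewrite [RHS]big_mkcond; apply: eq_big_seq => x; rewrite mem_iota => /andP[x_gt0 _].
rewrite (eq_bigl (fun y => (j %| x) && (j ^ b %| y))) => [|y]; last by rewrite dvdn_gcdb.
by case: (j %| x); rewrite /= ?Rmult_1_l ?big_pred0_eq.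
Qed.

Lemma INR_length_TNbk_le b k N : 0 < k ->
  (INR (length (TNbk N b k)) <= INR (N %/ k) * INR (N %/ k ^ b))%R.
Proof.
move=> k_gt0; rewrite -sum_dvdn_gcdb // -INR_count_TN TNbk_filter length_size size_filter.
apply/le_INR/leP/sub_count => -[x y] /eqP /= <-; exact: dvdnn.
Qed.

Lemma gcdb_eq_moebius b k N x y : 0 < k -> 0 < x <= N ->
  (if gcdb b x y == k then 1 else 0)%R =
  \big[Rplus/0%R]_(d <- iota 1 N.+1 | k * d %| gcdb b x y) moebius d.
Proof.
move=> k_gt0 /andP[x_gt0 x_N]; have [g_gt0 g_x _ _] := gcdb_spec b x y x_gt0.
have [k_g | k_ng] := boolP (k %| gcdb b x y); last first.
  rewrite ifN ?big_pred0 // => [d|]; last by apply: contraNneq k_ng => ->.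
  by apply/negbTE; apply: contra k_ng; apply: dvdn_trans; apply: dvdn_mulr.
have [m em] := dvdnP k_g; rewrite em.
have m_gt0 : 0 < m by move: g_gt0; rewrite em muln_gt0 => /andP[].
rewrite (eq_bigl (fun d => d %| m)) => [|d]; last by rewrite mulnC dvdn_pmul2r.
rewrite sum_moebius_dvdn; last by rewrite m_gt0; move: g_x; rewrite em; nia.
by rewrite -[X in _ == X]mul1n eqn_pmul2r.
Qed.

Lemma INR_length_TNbk_moebius b k N : 0 < k ->
  INR (length (TNbk N b k)) = \big[Rplus/0%R]_(d <- iota 1 N.+1)
     (moebius d * (INR (N %/ (k * d)) * INR (N %/ (k * d) ^ b)))%R.
Proof.
move=> k_gt0; rewrite TNbk_filter length_size size_filter.
rewrite (INR_count_TN (fun x y => gcdb b x y == k)).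
rewrite (eq_big_seq (fun x => \big[Rplus/0%R]_(d <- iota 1 N.+1)
           \big[Rplus/0%R]_(y <- iota 1 N | k * d %| gcdb b x y) moebius d)).
  rewrite exchange_big; apply: eq_big_seq => d; rewrite mem_iota => /andP[d_gt0 _].
  rewrite -sum_dvdn_gcdb ?muln_gt0 ?k_gt0 // big_distrr; apply: eq_bigr => x _.
  by rewrite big_distrr; apply: eq_bigr => y _; apply: esym (Rmult_1_r _).
move=> x; rewrite mem_iota => x_N; rewrite (exchange_big_dep predT) //= big_mkcond.
by apply: eq_bigr => y _; apply: gcdb_eq_moebius; lia.
Qed.

Lemma gcdb_range_TN b N p : p \in TN N -> 1 <= gcdb b p.1 p.2 < 1 + N.+1.
Proof.
rewrite TN_allpairs => /allpairsP[[x y] [/= x_N _ ->]] /=.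
rewrite mem_iota in x_N; have x_gt0 : 0 < x by case/andP: x_N.
have [g_gt0 g_x _ _] := gcdb_spec b x y x_gt0; lia.
Qed.

Lemma sum_length_TNbk b N :
  \big[Rplus/0%R]_(k <- iota 1 N.+1) INR (length (TNbk N b k)) = (INR N * INR N)%R.
Proof.
have -> : (INR N * INR N)%R = \big[Rplus/0%R]_(p <- TN N) 1%R.
  by rewrite sumR1_count count_predT TN_allpairs size_allpairs size_iota mult_INR.
rewrite (big_partition_iota _ (fun p => gcdb b p.1 p.2) _ 1 N.+1) => [|p]; last first.
  exact: gcdb_range_TN.
by apply: eq_bigr => k _; rewrite TNbk_filter length_size size_filter -sumR1_count.
Qed.

HB.instance Definition _ := Monoid.isComLaw.Build C (RtoC 0) Cplus
  Cplus_assoc Cplus_comm Cplus_0_l.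

Lemma sumC_big (L : nat -> nat -> C) l :
  sumC L l = \big[Cplus/RtoC 0]_(p <- l) L p.1 p.2.
Proof. by elim: l => [|p l IH]; rewrite ?big_nil ?big_cons //= -IH. Qed.

Lemma sumC_TN_partition b (L : nat -> nat -> C) N :
  sumC L (TN N) = \big[Cplus/RtoC 0]_(k <- iota 1 N.+1) sumC L (TNbk N b k).
Proof.
rewrite sumC_big (big_partition_iota _ (fun p => gcdb b p.1 p.2) _ 1 N.+1) => [|p].
  by apply: eq_bigr => k _; rewrite TNbk_filter sumC_big big_filter.
exact: gcdb_range_TN.
Qed.

Lemma big_iota_sum_n (G : AbelianMonoid) (op : Monoid.law (@zero G)) (a : nat -> G) N :
  (forall x y, op x y = plus x y) ->
  \big[op/zero]_(k <- iota 1 N.+1) a k = sum_n (fun n => a n.+1) N.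
Proof.
move=> opE; elim: N => [|N IH]; first by rewrite big_seq1 sum_O.
by rewrite -[N.+2]addn1 iotaD big_cat big_seq1 IH sum_Sn opE.
Qed.

(** * Densities *)

Lemma floor_ratio_bounds j N : 0 < j -> 0 < N ->
  (/ INR j - / INR N <= INR (N %/ j) / INR N <= / INR j)%R.
Proof.
move=> j_gt0 N_gt0.
have J_gt0 : (0 < INR j)%R by apply/lt_0_INR/ltP.
have n_gt0 : (0 < INR N)%R by apply/lt_0_INR/ltP.
have r_lt : (INR (N %% j) < INR j)%R by apply/lt_INR/ltP/ltn_pmod.
have r_ge0 := pos_INR (N %% j).
have -> : (INR (N %/ j) / INR N = / INR j - INR (N %% j) * / INR j * / INR N)%R.
  have nE : INR N = (INR (N %/ j) * INR j + INR (N %% j))%R.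
    by rewrite -mult_INR -plus_INR; congr INR; exact: divn_eq.
  rewrite nE; field; lra.
have t_le1 : (INR (N %% j) * / INR j <= 1)%R.
  rewrite -(Rinv_r (INR j)); last lra.
  by apply: Rmult_le_compat_r; [apply/Rlt_le/Rinv_0_lt_compat | apply: Rlt_le].
have t_ge0 : (0 <= INR (N %% j) * / INR j)%R.
  by apply: Rmult_le_pos => //; apply/Rlt_le/Rinv_0_lt_compat.
have := Rinv_0_lt_compat _ n_gt0; nra.
Qed.

Lemma INR_expn m n : INR (m ^ n) = (INR m ^ n)%R.
Proof. by rewrite -Nat_pow_expn pow_INR. Qed.

Lemma floor_ratio_lim j : 0 < j -> is_lim_seq (fun N => INR (N %/ j) / INR N)%R (/ INR j).
Proof.
move=> j_gt0.
apply: (is_lim_seq_le_le_loc (fun N => / INR j - / INR N)%R _ (fun _ => / INR j)).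
- by exists 1%N => N N_ge; apply: floor_ratio_bounds => //; apply/ltP.
- have := is_lim_seq_minus' _ _ _ _ (is_lim_seq_const (/ INR j)) is_lim_seq_inv_INR.
  by rewrite Rminus_0_r.
- exact: is_lim_seq_const.
Qed.

Lemma floor_prod_lim b j : 0 < j ->
  is_lim_seq (fun N => INR (N %/ j) * INR (N %/ j ^ b) / INR N ^ 2)%R (/ INR j ^ (b + 1)).
Proof.
move=> j_gt0; have jb_gt0 : 0 < j ^ b by rewrite expn_gt0 j_gt0.
have J_gt0 : (0 < INR j)%R by apply/lt_0_INR/ltP.
apply: (is_lim_seq_ext_loc (fun N => INR (N %/ j) / INR N * (INR (N %/ j ^ b) / INR N))%R).
  exists 1%N => N N_ge; have := lt_0_INR N N_ge; move=> N_gt0; field; lra.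
have -> : (/ INR j ^ (b + 1) = / INR j * / INR (j ^ b))%R.
  by rewrite INR_expn pow_add /= Rmult_1_r Rmult_comm Rinv_mult.
exact: is_lim_seq_mult' _ _ _ _ (floor_ratio_lim _ j_gt0) (floor_ratio_lim _ jb_gt0).
Qed.

Lemma floor_prod_bounds b j N : 0 < j -> 0 < b ->
  (0 <= INR (N %/ j) * INR (N %/ j ^ b) / INR N ^ 2 <= / INR j ^ 2)%R.
Proof.
move=> j_gt0 b_gt0; have jb_gt0 : 0 < j ^ b by rewrite expn_gt0 j_gt0.
have J_gt0 : (0 < INR j)%R by apply/lt_0_INR/ltP.
have inv_j2 : (0 < / INR j ^ 2)%R by apply/Rinv_0_lt_compat/pow_lt.
case: N => [|N]; first by rewrite !div0n /Rdiv !Rmult_0_l; lra.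
have [_ q1_le] := floor_ratio_bounds _ _ j_gt0 (ltn0Sn N).
have [_ q2_le] := floor_ratio_bounds _ _ jb_gt0 (ltn0Sn N).
have jjb : (/ INR (j ^ b) <= / INR j)%R.
  apply/Rinv_le_contravar/le_INR/leP => //; rewrite -{1}(expn1 j); exact: leq_pexp2l.
have n_gt0 : (0 < INR N.+1)%R by apply/lt_0_INR/ltP.
have q_ge0 m : (0 <= INR m / INR N.+1)%R by apply: Rle_mult_inv_pos; [apply: pos_INR|].
rewrite (_ : INR (N.+1 %/ j) * INR (N.+1 %/ j ^ b) / INR N.+1 ^ 2 =
  INR (N.+1 %/ j) / INR N.+1 * (INR (N.+1 %/ j ^ b) / INR N.+1))%R; last by field; lra.
split; first exact: Rmult_le_pos.
rewrite (_ : / INR j ^ 2 = / INR j * / INR j)%R; last by field; lra.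
by apply: Rmult_le_compat; [apply: q_ge0 | apply: q_ge0 | | lra].
Qed.

Definition moebius_series b : R := Series (fun n => moebius n.+1 / INR n.+1 ^ (b + 1))%R.

Definition density b k N : R := (INR (length (TNbk N b k)) / INR N ^ 2)%R.

Lemma density_bounds b k N : 0 < k -> 0 < b -> (0 <= density b k N <= / INR k ^ 2)%R.
Proof.
move=> k_gt0 b_gt0; have [_ floor_le] := floor_prod_bounds b k N k_gt0 b_gt0.
have N2_ge0 : (0 <= / INR N ^ 2)%R by rewrite -pow_inv; apply: pow2_ge_0.
split; first by apply: Rmult_le_pos => //; apply: pos_INR.
by apply: Rle_trans floor_le; apply: Rmult_le_compat_r => //; apply: INR_length_TNbk_le.
Qed.

Lemma density_moebius b k N : 0 < k -> density b k N =
  sum_n (fun n => moebius n.+1 *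
    (INR (N %/ (k * n.+1)) * INR (N %/ (k * n.+1) ^ b) / INR N ^ 2))%R N.
Proof.
move=> k_gt0; rewrite /density INR_length_TNbk_moebius // big_iota_sum_n // /Rdiv.
rewrite -sum_n_Rmult_r; apply: sum_n_ext => n; exact: Rmult_assoc.
Qed.

Lemma density_lim b k : 0 < k -> 0 < b ->
  is_lim_seq (density b k) (moebius_series b / INR k ^ (b + 1))%R.
Proof.
move=> k_gt0 b_gt0; have kn_gt0 n : 0 < k * n.+1 by rewrite muln_gt0 k_gt0.
have k_ge1 : (1 <= INR k)%R by apply: (le_INR 1); apply/leP.
set a := fun N n => (moebius n.+1 *
  (INR (N %/ (k * n.+1)) * INR (N %/ (k * n.+1) ^ b) / INR N ^ 2))%R.
have a_lim n : is_lim_seq (a^~ n) (moebius n.+1 * / INR (k * n.+1) ^ (b + 1))%R.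
  exact: is_lim_seq_scal_l (floor_prod_lim b _ (kn_gt0 n)).
have a_le N n : (Rabs (a N n) <= / INR n.+1 ^ 2)%R.
  have [floor_ge0 floor_le] := floor_prod_bounds b _ N (kn_gt0 n) b_gt0.
  rewrite /a Rabs_mult (Rabs_pos_eq (_ / _)) //.
  rewrite -[X in (_ <= X)%R]Rmult_1_l.
  apply: Rmult_le_compat; [exact: Rabs_pos | exact: floor_ge0 | exact: Rabs_moebius_le1 |].
  apply: Rle_trans floor_le _; apply/Rinv_le_contravar/pow_incr.
    by apply: pow_lt; apply: INR_S_gt0.
  rewrite mult_INR; have := INR_S_gt0 n; nra.
have [l [l_series l_lim]] := tannery a _ _ a_lim a_le ex_series_inv_sq.
have -> : (moebius_series b / INR k ^ (b + 1))%R = l.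
  rewrite -(is_series_unique _ _ l_series) /Rdiv -Series_scal_r.
  apply: Series_ext => n; rewrite mult_INR Rpow_mult_distr Rinv_mult.
  by move: (INR k ^ _)%R (INR n.+1 ^ _)%R => x y; rewrite /Rdiv; ring.
apply: (is_lim_seq_ext (fun N => sum_n (a N) N)) => [N|]; last exact: l_lim.
by rewrite density_moebius.
Qed.

Lemma sum_density b N : 0 < N -> sum_n (fun n => density b n.+1 N) N = 1%R.
Proof.
move=> N_gt0; have n_gt0 : (0 < INR N)%R by apply/lt_0_INR/ltP.
rewrite /density /Rdiv sum_n_Rmult_r.
rewrite -(big_iota_sum_n _ Rplus (fun k => INR (length (TNbk N b k)))) // sum_length_TNbk.
suff : (INR N * INR N * / INR N ^ 2 = 1)%R by []; field; lra.
Qed.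

Lemma moebius_series_zeta b : 0 < b -> (moebius_series b * zeta_nat (b + 1) = 1)%R.
Proof.
move=> b_gt0.
have d_lim n := density_lim b n.+1 (ltn0Sn n) b_gt0.
have d_le N n : (Rabs (density b n.+1 N) <= / INR n.+1 ^ 2)%R.
  by have [d_ge0 d_le] := density_bounds b n.+1 N (ltn0Sn n) b_gt0; rewrite Rabs_pos_eq.
have [l [l_series l_lim]] := tannery _ _ _ d_lim d_le ex_series_inv_sq.
have l1 : l = 1%R.
  have one_lim : is_lim_seq (fun N => sum_n (fun n => density b n.+1 N) N) 1%R.
    apply: (is_lim_seq_ext_loc (fun _ => 1%R)); last exact: is_lim_seq_const.
    by exists 1%N => N /ltP N_gt0; rewrite sum_density.
  have := is_lim_seq_unique (fun N => sum_n (fun n => density b n.+1 N) N) l l_lim.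
  by rewrite (is_lim_seq_unique _ _ one_lim) => -[].
rewrite l1 in l_series.
by rewrite /zeta_nat -Series_scal_l; exact: is_series_unique.
Qed.

Lemma mean_N_weighted b (L : nat -> nat -> C) N : 0 < N ->
  mean_N L N = sum_n (fun n => Cmult (RtoC (density b n.+1 N)) (avg_bk L b n.+1 N)) N.
Proof.
move=> N_gt0; have N2_neq0 : (INR N ^ 2 <> 0)%R by apply/pow_nonzero/not_0_INR; lia.
rewrite /mean_N (sumC_TN_partition b) /Cdiv (big_iota_sum_n _ Cplus) //.
by rewrite -sum_n_Cmult_r; apply: sum_n_ext => n; exact: sumC_div_split.
Qed.

Lemma Cmod_weighted_avg_le b (L : nat -> nat -> C) B n N : 0 < b ->
  (forall r s, Cmod (L r s) <= B)%R ->
  (Cmod (Cmult (RtoC (density b n.+1 N)) (avg_bk L b n.+1 N)) <= B * / INR n.+1 ^ 2)%R.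
Proof.
move=> b_gt0 LB; have [d_ge0 d_le] := density_bounds b n.+1 N (ltn0Sn n) b_gt0.
rewrite Cmod_mult Cmod_R Rabs_pos_eq // Rmult_comm.
by apply: Rmult_le_compat => //; [exact: Cmod_ge_0 | exact: Cmod_avg_bk_le].
Qed.

End GcdbDensity.

Import GcdbDensity.

Theorem mainTheorem6 (b : nat) (L : nat -> nat -> C) (Mk : nat -> C) :
  (1 <= b)%nat ->
  (exists B : R, forall r s : nat, Cmod (L r s) <= B) ->
  (forall k : nat, (1 <= k)%nat ->
     filterlim (fun N => avg_bk L b k N) eventually (locally (Mk k))) ->
  exists z : C,
    is_series (fun n => Cdiv (Mk (S n)) (RtoC (INR (S n) ^ (b + 1)))) z /\
    exists m : C,
      filterlim (fun N => mean_N L N) eventually (locally m) /\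
      m = Cdiv z (RtoC (zeta_nat (b + 1))).
Proof.
move=> b_ge1 [B LB] avg_lim; have b_gt0 := introT ssrnat.leP b_ge1.
set c := moebius_series b; set zeta := zeta_nat (b + 1).
have zeta_c : zeta * c = 1 by rewrite Rmult_comm; exact: moebius_series_zeta.
have term_lim n : filterlim (fun N => Cmult (RtoC (density b (S n) N)) (avg_bk L b (S n) N))
    eventually (locally (Cmult (RtoC (c / INR (S n) ^ (b + 1))) (Mk (S n)))).
  apply: filterlim_RtoC_mult; first exact: density_lim.
  by apply: avg_lim; lia.
have term_le N n := Cmod_weighted_avg_le b L B n N b_gt0 LB.
have [z0 [z0_series mean_lim]] :=
  tannery _ _ _ term_lim term_le (ex_series_scal_l B _ ex_series_inv_sq).
exists (Cmult (RtoC zeta) z0); split.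
  apply: is_series_ext (is_series_scal_l (RtoC zeta) _ _ z0_series) => n.
  by apply: Cmult_RtoC_div zeta_c _; apply/pow_nonzero/not_0_INR.
exists z0; split.
  apply: filterlim_ext_loc mean_lim; exists 1%nat => N N_ge.
  by rewrite (mean_N_weighted b L N (introT ssrnat.leP N_ge)).
have zeta_neq0 : zeta <> 0 by move=> zeta0; rewrite zeta0 Rmult_0_l in zeta_c; lra.
exact: esym (Cmult_RtoC_K _ _ zeta_neq0).
Qed.
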